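(* Let $\mathcal D[t]\subset\mathcal H\subset\mathcal D^\times[t^\times]$ be a rigged Hilbert space with $\mathcal D[t]$ a reflexive Fréchet space, $(X,\mu)$ a $\sigma$-finite measure space, $\omega,\theta$ Riesz distribution bases, and $m:X\to\mathbb C$ measurable such that $x\mapsto m(x)\langle f,\check\omega_x\rangle\langle\check\theta_x,g\rangle$ is integrable for all $f,g\in\mathcal H$. If there exists $C>0$ with $|m(x)|\ge C$ for all $x\in X$, then $M_{m,\omega,\theta}$ is injective and its inverse is bounded, i.e. there is $c>0$ with $\|M_{m,\omega,\theta}f\|\ge c\|f\|$ for all $f\in D(M_{m,\omega,\theta})$.
   Context: Rigged Hilbert space: $\mathcal D$ dense subspace of Hilbert space $\mathcal H$ with a locally convex topology finer than the norm topology, $\mathcal D^\times$ its conjugate dual, $\mathcal H\subset\mathcal D^\times$, pairing extending the inner product, $\langle f,F\rangle:=\overline{\langle F,f\rangle}$. Distribution frame: weakly measurable $\omega:X\to\mathcal D^\times$ with $A\|f\|^2\le\int_X|\langle f,\omega_x\rangle|^2d\mu\le B\|f\|^2$ for $f\in\mathcal D$. $\omega$ is $\mu$-independent if the only measurable $\xi$ with $\int_X\xi(x)\langle g,\omega_x\rangle d\mu=0$ for all $g\in\mathcal D$ is $\xi=0$ a.e. A Riesz distribution basis is a $\mu$-independent distribution frame. For such maps, $f\mapsto\langle f,\omega_\cdot\rangle$ extends by continuity to a bounded operator $\mathcal H\to L^2(X,\mu)$ and $\langle f,\check\omega_x\rangle$ denotes the value at $x$ of this extension applied to $f\in\mathcal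 H$; similarly for $\check\theta$. Distribution multiplier $M_{m,\omega,\theta}$: domain is the set of $f\in\mathcal D$ such that $\int_X m(x)\langle f,\omega_x\rangle\langle\theta_x,g\rangle d\mu$ converges for all $g\in\mathcal D$ and is bounded in $g$ w.r.t. the $\mathcal H$-norm; $M_{m,\omega,\theta}f\in\mathcal H$ is its Riesz representative. *)

From HB Require Import structures.
From mathcomp Require Import all_boot all_order all_algebra.
From mathcomp Require Import all_classical all_reals all_analysis.
From mathcomp Require Export complex.
Set Implicit Arguments. Unset Strict Implicit. Unset Printing Implicit Defensive.
Import Order.TTheory GRing.Theory Num.Theory.
Local Open Scope ring_scope.
Local Open Scope classical_set_scope.

Definition cabs (R : realType) (z : R[i]) : R :=
  Num.sqrt (complex.Re z ^+ 2 + complex.Im z ^+ 2).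

Section Hilbert.
Context {R : realType} {H : lmodType R[i]}.

Definition is_inner_product (ip : H -> H -> R[i]) : Prop :=
  [/\ forall (a : R[i]) (x y z : H), ip (a *: x + y) z = a * ip x z + ip y z,
      forall x y : H, ip y x = (ip x y)^*,
      forall x : H, 0 <= ip x x
    & forall x : H, ip x x = 0 -> x = 0].

Definition hnorm (ip : H -> H -> R[i]) (h : H) : R :=
  Num.sqrt (complex.Re (ip h h)).

Definition is_hilbert (ip : H -> H -> R[i]) : Prop :=
  is_inner_product ip /\
  forall u : nat -> H,
    (forall e : R, 0 < e -> exists N, forall k l, (N <= k)%N -> (N <= l)%N ->
        hnorm ip (u k - u l) < e) ->
    exists h : H, forall e : R, 0 < e -> exists N, forall k, (N <= k)%N ->
        hnorm ip (u k - h) < e.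
End Hilbert.

(* Fréchet spaces, presented by a countable separating family of        *)
(* seminorms p_0, p_1, ... (the topology t of D is the one generated by *)
(* them), complete for that family.                                      *)
Section Frechet.
Context {R : realType} {D : lmodType R[i]}.

Definition is_seminorm (s : D -> R) : Prop :=
  [/\ forall x, 0 <= s x,
      forall x y, s (x + y) <= s x + s y
    & forall (a : R[i]) x, s (a *: x) = cabs a * s x].

(* max of the first n+1 seminorms: basic continuous seminorms of t *)
Definition qmax (p : nat -> D -> R) (n : nat) (x : D) : R :=
  \big[Num.max/0]_(k < n.+1) p k x.

Definition is_frechet (p : nat -> D -> R) : Prop :=
  [/\ forall n, is_seminorm (p n),
      forall x, (forall n, p n x = 0) -> x = 0
    & forall u : nat -> D,
      (forall n (e : R), 0 < e -> exists N, forall k l, (N <= k)%N -> (N <= l)%N ->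
          qmax p n (u k - u l) < e) ->
      exists f : D, forall n (e : R), 0 < e -> exists N, forall k, (N <= k)%N ->
          qmax p n (u k - f) < e].

(* D^x : continuous conjugate-linear functionals on D[t].
   For F in D^x and f in D we write <F,f> := F f and <f,F> := (F f)^*. *)
Definition in_cdual (p : nat -> D -> R) (F : D -> R[i]) : Prop :=
  (forall (a : R[i]) x y, F (a *: x + y) = a^* * F x + F y) /\
  exists n (K : R), forall x, cabs (F x) <= K * qmax p n x.

Definition t_bounded (p : nat -> D -> R) (B : set D) : Prop :=
  forall n, exists K : R, forall x, B x -> qmax p n x <= K.

(* Reflexivity: every linear functional on D^x which is continuous for the
   strong dual topology t^x (uniform convergence on t-bounded sets) is the
   evaluation at some element of D.  (For Fréchet spaces, which are
   barrelled, semi-reflexivity is equivalent to reflexivity.) *)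
Definition is_reflexive (p : nat -> D -> R) : Prop :=
  forall Phi : (D -> R[i]) -> R[i],
    (forall (a : R[i]) F G, in_cdual p F -> in_cdual p G ->
        Phi (fun x => a * F x + G x) = a * Phi F + Phi G) ->
    (exists (B : set D) (K : R), t_bounded p B /\
       forall F, in_cdual p F -> forall r : R,
         (forall x, B x -> cabs (F x) <= r) -> cabs (Phi F) <= K * r) ->
    exists f : D, forall F, in_cdual p F -> Phi F = F f.
End Frechet.

(* Rigged Hilbert space D[t] ⊂ H ⊂ D^x[t^x]: D is identified with its    *)
(* image under the injective linear map iota : D -> H, which has dense   *)
(* range and is continuous from t to the norm topology (t is finer).     *)
Definition is_rigged (R : realType) (D H : lmodType R[i])
  (p : nat -> D -> R) (ip : H -> H -> R[i]) (iota : D -> H) : Prop :=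
  [/\ is_hilbert ip /\ is_frechet p,
      forall (a : R[i]) x y, iota (a *: x + y) = a *: iota x + iota y,
      injective iota,
      forall (h : H) (e : R), 0 < e -> exists f : D, hnorm ip (h - iota f) < e
    & exists n (K : R), forall f, hnorm ip (iota f) <= K * qmax p n f].

Section CInt.
Context {R : realType} {d : measure_display} {X : measurableType d}.

Definition cmeasurable (f : X -> R[i]) : Prop :=
  measurable_fun setT (fun x => complex.Re (f x)) /\
  measurable_fun setT (fun x => complex.Im (f x)).

Definition cintegrable (mu : {measure set X -> \bar R}) (f : X -> R[i]) : Prop :=
  mu.-integrable setT (fun x => (complex.Re (f x))%:E) /\
  mu.-integrable setT (fun x => (complex.Im (f x))%:E).

Definition cintegral (mu : {measure set X -> \bar R}) (f : X -> R[i]) : R[i] :=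
  Complex (Rintegral mu setT (fun x => complex.Re (f x)))
          (Rintegral mu setT (fun x => complex.Im (f x))).

Definition sqint (mu : {measure set X -> \bar R}) (f : X -> R[i]) : \bar R :=
  (\int[mu]_x ((cabs (f x)) ^+ 2)%:E)%E.
End CInt.

Section DistFrames.
Context {R : realType} {D H : lmodType R[i]}.
Context {d : measure_display} {X : measurableType d}.
Variables (p : nat -> D -> R) (ip : H -> H -> R[i]) (iota : D -> H).
Variable (mu : {measure set X -> \bar R}).

Definition is_distribution_frame (omega : X -> D -> R[i]) : Prop :=
  [/\ forall x, in_cdual p (omega x),
      forall f : D, cmeasurable (fun x => omega x f)
    & exists A B : R, [/\ 0 < A, 0 < B &
        forall f : D,
          ((A * hnorm ip (iota f) ^+ 2)%:E <= sqint mu (fun x => omega x f))%E /\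
          (sqint mu (fun x => omega x f) <= (B * hnorm ip (iota f) ^+ 2)%:E)%E]].

(* <g, omega_x> = (omega x g)^* *)
Definition mu_independent (omega : X -> D -> R[i]) : Prop :=
  forall xi : X -> R[i], cmeasurable xi ->
    (forall g : D,
       cintegrable mu (fun x => xi x * (omega x g)^*) /\
       cintegral mu (fun x => xi x * (omega x g)^*) = 0) ->
    {ae mu, forall x, xi x = 0}.

Definition is_riesz_distribution_basis (omega : X -> D -> R[i]) : Prop :=
  is_distribution_frame omega /\ mu_independent omega.

(* T is (a representative of) the bounded extension H -> L^2(X,mu) of
   f |-> <f, omega_.> = (omega_. f)^*; T h x plays the role of
   <h, check(omega)_x>.  Such T is unique up to mu-a.e. equality. *)
Definition is_analysis_extension (omega : X -> D -> R[i]) (T : H -> X -> R[i]) : Prop :=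
  [/\ forall f : D, {ae mu, forall x, T (iota f) x = (omega x f)^*},
      forall h : H, cmeasurable (T h),
      exists K : R, forall h : H, (sqint mu (T h) <= (K * hnorm ip h ^+ 2)%:E)%E
    & forall (a : R[i]) (h1 h2 : H),
        {ae mu, forall x, T (a *: h1 + h2) x = a * T h1 x + T h2 x}].

(* Distribution multiplier M_{m,omega,theta}:
   integrand x |-> m(x) <f,omega_x> <theta_x,g> *)
Definition mult_integrand (m : X -> R[i]) (omega theta : X -> D -> R[i])
  (f g : D) : X -> R[i] :=
  fun x => m x * (omega x f)^* * theta x g.

Definition in_mult_domain (m : X -> R[i]) (omega theta : X -> D -> R[i]) (f : D) : Prop :=
  (forall g : D, cintegrable mu (mult_integrand m omega theta f g)) /\
  exists K : R, forall g : D,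
    cabs (cintegral mu (mult_integrand m omega theta f g)) <= K * hnorm ip (iota g).

(* h = M_{m,omega,theta} f  (Riesz representative; unique by density) *)
Definition is_mult_value (m : X -> R[i]) (omega theta : X -> D -> R[i])
  (f : D) (h : H) : Prop :=
  forall g : D, ip h (iota g) = cintegral mu (mult_integrand m omega theta f g).
End DistFrames.

(* Let [M f = h] and [a = T_omega f], where [T_omega], [T_theta] are the analysis operators.
   The defining identity [<h, g> = ∫ m a (T_theta g)^*] extends from [g ∈ D] to all of [H].
   The lower frame bound makes [(y, z) ↦ ∫ T_theta y (T_theta z)^*] an inner product on [H]
   equivalent to the given one, so Riesz representation together with mu-independence of
   [theta] shows that [T_theta] maps [H] onto [L^2(mu)], with [√A_theta ‖y‖ ≤ ‖T_theta y‖].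
   Taking [T_theta y = (m / |m|) a] gives
   [C ‖a‖^2 ≤ ∫ |m| |a|^2 = <h, y> ≤ ‖h‖ ‖y‖ ≤ ‖h‖ ‖a‖ / √A_theta],
   and [‖a‖ ≥ √A_omega ‖f‖]. Injectivity follows since [M] is linear. *)

From HB Require Import structures.
From mathcomp Require Import all_boot all_order all_algebra.
From mathcomp Require Import all_classical all_reals all_analysis.
From mathcomp Require Import measurable_realfun.
From mathcomp Require Import complex ring lra.
Import Order.TTheory GRing.Theory Num.Theory.
Set Implicit Arguments. Unset Strict Implicit. Unset Printing Implicit Defensive.
Local Open Scope classical_set_scope.
Local Open Scope complex_scope.
Local Open Scope ring_scope.

Section ComplexNumbers.
Variable R : realType.
Implicit Types (z w : R[i]) (r : R).
Local Notation Re := complex.Re.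
Local Notation Im := complex.Im.

Lemma cabsE z : (cabs z)%:C = `|z|.
Proof. by rewrite normc_def. Qed.

Lemma cabs_ge0 z : 0 <= cabs z.
Proof. exact: sqrtr_ge0. Qed.

Lemma cabsM z w : cabs (z * w) = cabs z * cabs w.
Proof. by apply: complexI; rewrite rmorphM /= !cabsE normrM. Qed.

Lemma cabsD z w : cabs (z + w) <= cabs z + cabs w.
Proof. by rewrite -lecR rmorphD /= !cabsE ler_normD. Qed.

Lemma cabsN z : cabs (- z) = cabs z.
Proof. by apply: complexI; rewrite !cabsE normrN. Qed.

Lemma cabsJ z : cabs z^* = cabs z.
Proof. by apply: complexI; rewrite !cabsE norm_conjC. Qed.

Lemma cabsR r : cabs r%:C = `|r|.
Proof. by rewrite /cabs /= expr0n /= addr0 sqrtr_sqr. Qed.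

Lemma cabs_eq0 z : (cabs z == 0) = (z == 0).
Proof. by rewrite -(inj_eq (@complexI _)) cabsE rmorph0 normr_eq0. Qed.

Lemma mulcJ_cabs z : z * z^* = (cabs z ^+ 2)%:C.
Proof. by rewrite -normCK -cabsE rmorphXn. Qed.

Lemma Re_le_cabs z : `|Re z| <= cabs z.
Proof. by rewrite -lecR cabsE normc_ge_Re. Qed.

Lemma Im_le_cabs z : `|Im z| <= cabs z.
Proof.
rewrite -(sqrtr_sqr (Im z)) ler_sqrt ?lerDr ?sqr_ge0 //.
by rewrite addr_ge0 ?sqr_ge0.
Qed.

Lemma cabs_le_ReIm z : cabs z <= `|Re z| + `|Im z|.
Proof.
have ReIm_ge0 : 0 <= `|Re z| + `|Im z| by rewrite addr_ge0.
rewrite -(ger0_norm ReIm_ge0) -sqrtr_sqr /cabs ler_sqrt ?sqr_ge0 //.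
rewrite sqrrD !real_normK ?num_real // -addrA lerD2l lerDr.
by rewrite mulrn_wge0 // mulr_ge0.
Qed.

Lemma conjcD z w : (z + w)^* = z^* + w^*. Proof. exact: rmorphD. Qed.
Lemma conjcB z w : (z - w)^* = z^* - w^*. Proof. exact: rmorphB. Qed.
Lemma conjcM z w : (z * w)^* = z^* * w^*. Proof. exact: rmorphM. Qed.

Lemma conjcR r : (r%:C)^* = r%:C :> R[i].
Proof. exact: conjc_real. Qed.

Lemma ReJ z : Re z^* = Re z. Proof. by case: z. Qed.
Lemma ImJ z : Im z^* = - Im z. Proof. by case: z. Qed.
Lemma ReM z w : Re (z * w) = Re z * Re w - Im z * Im w.
Proof. by case: z => a b; case: w. Qed.
Lemma ImM z w : Im (z * w) = Re z * Im w + Im z * Re w.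
Proof. by case: z => a b; case: w => c e /=; rewrite addrC. Qed.
Lemma ReD z w : Re (z + w) = Re z + Re w. Proof. by case: z; case: w. Qed.
Lemma ImD z w : Im (z + w) = Im z + Im w. Proof. by case: z; case: w. Qed.
Lemma ReB z w : Re (z - w) = Re z - Re w. Proof. by case: z; case: w. Qed.

Lemma Re_realM r z : Re (r%:C * z) = r * Re z.
Proof. by rewrite ReM /= mul0r subr0. Qed.

Lemma Re_ge0_real z : 0 <= z -> z = (Re z)%:C.
Proof. by case: z => a b; rewrite lecE /= => /andP[/eqP -> _]. Qed.

Lemma Re_mulNi z : Re (- 'i * z) = Im z.
Proof. by case: z => a b /=; ring. Qed.

Lemma mul_conj_phase z w : z != 0 ->
  (z * w) * ((cabs z)^-1%:C * z * w)^* = (cabs z * cabs w ^+ 2)%:C.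
Proof.
move=> z_neq0; rewrite !conjcM conjcR.
have -> : z * w * ((cabs z)^-1%:C * z^* * w^*) = (z * z^*) * (w * w^*) * (cabs z)^-1%:C by ring.
rewrite !mulcJ_cabs -!rmorphM /=; congr _%:C; field.
by rewrite cabs_eq0.
Qed.

Lemma complex_eqP z w : Re z = Re w -> Im z = Im w -> z = w.
Proof. by case: z => a b; case: w => c e /= -> ->. Qed.
End ComplexNumbers.

Section RealInequalities.
Variable R : realType.

Lemma discriminant_le (A B c : R) : 0 <= A ->
  (forall t : R, 0 <= t ^+ 2 * A + 2 * t * c + B) -> c ^+ 2 <= A * B.
Proof.
move=> A_ge0 quad_ge0; have [A_gt0|] := ltrP 0 A.
  have := quad_ge0 (- c / A).
  have -> : (- c / A) ^+ 2 * A + 2 * (- c / A) * c + B = B - c ^+ 2 / A.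
    by field; rewrite gt_eqF.
  by rewrite subr_ge0 ler_pdivrMr // mulrC.
move=> A_le0; have A0 : A = 0 by apply/eqP; rewrite eq_le A_le0 A_ge0.
subst A.
rewrite mul0r; have [->|c_neq0] := eqVneq c 0; first by rewrite expr0n.
have := quad_ge0 (- (B + 1) / (2 * c)).
have -> : (- (B + 1) / (2 * c)) ^+ 2 * 0 + 2 * (- (B + 1) / (2 * c)) * c + B = -1.
  by field; rewrite c_neq0.
by rewrite lerNr oppr0 ler10.
Qed.

Lemma ler_of_sqr (x y : R) : 0 <= y -> x ^+ 2 <= y ^+ 2 -> x <= y.
Proof.
move=> y_ge0 le_sqr; apply: le_trans (ler_norm x) _.
by rewrite -(ger0_norm y_ge0) -ler_sqr ?nnegrE // !real_normK ?num_real.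
Qed.

Lemma ler_scaled_eps (x y c : R) : 0 <= c ->
  (forall e, 0 < e -> x <= y + c * e) -> x <= y.
Proof.
move=> c_ge0 le_xy; apply/ler_addgt0Pr => e e_gt0.
have c1_gt0 : 0 < c + 1 by rewrite ltr_wpDl.
apply: le_trans (le_xy _ (divr_gt0 e_gt0 c1_gt0)) _.
by rewrite lerD2l mulrCA ger_pMr // ler_pdivrMr // mul1r lerDl.
Qed.

Lemma natSinv_lt (e : R) : 0 < e -> exists N : nat, N.+1%:R^-1 < e.
Proof.
move=> e_gt0; have [N _ /(_ N (leqnn N))] := near_infty_natSinv_lt (PosNum e_gt0).
by exists N.
Qed.

Lemma natSinv_le (k N : nat) : (N <= k)%N -> k.+1%:R^-1 <= N.+1%:R^-1 :> R.
Proof. by move=> le_Nk; rewrite lef_pV2 ?posrE ?ltr0n // ler_nat. Qed.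

Lemma le0_natSinv (x c : R) : 0 <= c -> (forall k : nat, x <= c * k.+1%:R^-1) -> x <= 0.
Proof.
move=> c_ge0 x_le; apply: (ler_scaled_eps c_ge0) => e e_gt0; rewrite add0r.
have [k k_lt] := natSinv_lt e_gt0.
by apply: le_trans (x_le k) _; rewrite ler_wpM2l // ltW.
Qed.
End RealInequalities.

Section SemiInnerProduct.
Variables (R : realType) (V : lmodType R[i]).

Definition is_semi_inner_product (b : V -> V -> R[i]) : Prop :=
  [/\ forall (a : R[i]) (x y z : V), b (a *: x + y) z = a * b x z + b y z,
      forall x y : V, b y x = (b x y)^*
    & forall x : V, 0 <= b x x].

Lemma inner_product_semi (b : V -> V -> R[i]) :
  is_inner_product b -> is_semi_inner_product b.
Proof. by case. Qed.

Definition complete_for (b : V -> V -> R[i]) : Prop :=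
  forall u : nat -> V,
    (forall e : R, 0 < e -> exists N, forall k l, (N <= k)%N -> (N <= l)%N ->
        hnorm b (u k - u l) < e) ->
    exists h : V, forall e : R, 0 < e -> exists N, forall k, (N <= k)%N ->
        hnorm b (u k - h) < e.

Variable b : V -> V -> R[i].
Hypothesis hb : is_semi_inner_product b.
Local Notation Re := complex.Re.
Local Notation Q x := (Re (b x x)).
Local Notation hn := (hnorm b).
Implicit Types (x y z : V) (a : R[i]).

Lemma ipDZl a x y z : b (a *: x + y) z = a * b x z + b y z.
Proof. by case: hb => ->. Qed.

Lemma ipC x y : b y x = (b x y)^*.
Proof. by case: hb => _ ->. Qed.

Lemma ip_ge0 x : 0 <= b x x.
Proof. by case: hb => _ _ ->. Qed.

Lemma ip0l z : b 0 z = 0.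
Proof.
have := ipDZl 1 0 0 z; rewrite scaler0 addr0 mul1r => h.
by apply/(addrI (b 0 z)); rewrite addr0 -h.
Qed.

Lemma ipDl x y z : b (x + y) z = b x z + b y z.
Proof. by have := ipDZl 1 x y z; rewrite scale1r mul1r. Qed.

Lemma ipZl a x z : b (a *: x) z = a * b x z.
Proof. by rewrite -[a *: x]addr0 ipDZl ip0l addr0. Qed.

Lemma ipNl x z : b (- x) z = - b x z.
Proof. by rewrite -scaleN1r ipZl mulN1r. Qed.

Lemma ipBl x y z : b (x - y) z = b x z - b y z.
Proof. by rewrite ipDl ipNl. Qed.

Lemma ipDr x y z : b z (x + y) = b z x + b z y.
Proof. by rewrite ![b z _]ipC ipDl conjcD. Qed.

Lemma ipZr a x z : b z (a *: x) = a^* * b z x.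
Proof. by rewrite ![b z _]ipC ipZl conjcM. Qed.

Lemma ipBr x y z : b z (x - y) = b z x - b z y.
Proof. by rewrite ![b z _]ipC ipBl conjcB. Qed.

Lemma ip_real x : b x x = (Q x)%:C.
Proof. exact/Re_ge0_real/ip_ge0. Qed.

Lemma Re_ip_ge0 x : 0 <= Q x.
Proof. by have := ip_ge0 x; rewrite ip_real lecR. Qed.

Lemma Re_ipC x y : Re (b y x) = Re (b x y).
Proof. by rewrite ipC ReJ. Qed.

Lemma Re_ipD x y : Q (x + y) = Q x + 2 * Re (b x y) + Q y.
Proof. rewrite ipDl !ipDr !ReD Re_ipC; ring. Qed.

Lemma Re_ipB x y : Q (x - y) = Q x - 2 * Re (b x y) + Q y.
Proof. rewrite ipBl !ipBr !ReB Re_ipC; ring. Qed.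

Lemma Re_ipZ a x : Q (a *: x) = cabs a ^+ 2 * Q x.
Proof. by rewrite ipZl ipZr mulrA mulcJ_cabs ip_real -rmorphM. Qed.

Lemma hnorm_ge0 x : 0 <= hn x.
Proof. exact: sqrtr_ge0. Qed.

Lemma sqr_hnorm x : hn x ^+ 2 = Q x.
Proof. by rewrite sqr_sqrtr // Re_ip_ge0. Qed.

Lemma hnorm0 : hn 0 = 0.
Proof. by rewrite /hnorm ip0l sqrtr0. Qed.

Lemma hnormZ a x : hn (a *: x) = cabs a * hn x.
Proof.
by rewrite /hnorm Re_ipZ sqrtrM ?sqr_ge0 // sqrtr_sqr ger0_norm // cabs_ge0.
Qed.

Lemma hnormN x : hn (- x) = hn x.
Proof. by rewrite -scaleN1r hnormZ cabsN cabsR normr1 mul1r. Qed.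

Lemma hnormB x y : hn (x - y) = hn (y - x).
Proof. by rewrite -hnormN opprB. Qed.

Lemma Re_ip_le x y : Re (b x y) <= hn x * hn y.
Proof.
have quad_ge0 t : 0 <= t ^+ 2 * Q x + 2 * t * Re (b x y) + Q y.
  have := Re_ip_ge0 (t%:C *: x + y).
  by rewrite Re_ipD Re_ipZ ipZl Re_realM cabsR real_normK ?num_real // mulrA.
apply: ler_of_sqr; first by rewrite mulr_ge0 ?hnorm_ge0.
by rewrite exprMn !sqr_hnorm; exact: discriminant_le (Re_ip_ge0 x) quad_ge0.
Qed.

(* Cauchy-Schwarz: rotate x by the phase of [b x y] to reduce to the real part. *)
Lemma cabs_ip_le x y : cabs (b x y) <= hn x * hn y.
Proof.
have [->|bxy_neq0] := eqVneq (cabs (b x y)) 0; first by rewrite mulr_ge0 ?hnorm_ge0.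
have bxy_gt0 : 0 < cabs (b x y) by rewrite lt_def bxy_neq0 cabs_ge0.
have := Re_ip_le ((b x y)^* *: x) y.
rewrite ipZl hnormZ cabsJ mulrC mulcJ_cabs /= -mulrA expr2 ler_pM2l //.
Qed.

Lemma hnormD x y : hn (x + y) <= hn x + hn y.
Proof.
apply: ler_of_sqr; first by rewrite addr_ge0 ?hnorm_ge0.
rewrite sqr_hnorm Re_ipD sqrrD -!sqr_hnorm.
have := Re_ip_le x y; lra.
Qed.

Lemma hnormB_ge x y : hn x - hn y <= hn (x - y).
Proof. by have := hnormD (x - y) y; rewrite subrK; lra. Qed.
End SemiInnerProduct.

Lemma hnorm_eq0 (R : realType) (V : lmodType R[i]) (b : V -> V -> R[i]) (x : V) :
  is_inner_product b -> hnorm b x = 0 -> x = 0.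
Proof.
move=> b_ip hx0; have hb := inner_product_semi b_ip.
case: b_ip => _ _ _; apply.
by rewrite (ip_real hb) -(sqr_hnorm hb) hx0 expr0n.
Qed.

Section RieszRepresentation.
Variables (R : realType) (V : lmodType R[i]) (b : V -> V -> R[i]).
Hypothesis hb : is_semi_inner_product b.
Hypothesis b_complete : complete_for b.
Variable phi : V -> R[i].
Hypothesis phi_antilinear : forall (a : R[i]) x y, phi (a *: x + y) = a^* * phi x + phi y.
Variable M : R.
Hypothesis phi_bounded : forall x, cabs (phi x) <= M * hnorm b x.
Local Notation Re := complex.Re.
Local Notation Q x := (Re (b x x)).
Local Notation hn := (hnorm b).
Implicit Types (x y : V) (a : R[i]).

Lemma antilinear0 : phi 0 = 0.
Proof.
have := phi_antilinear 1 0 0; rewrite scaler0 addr0 conjC1 mul1r => h.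
by apply/(addrI (phi 0)); rewrite addr0 -h.
Qed.

Lemma antilinearD x y : phi (x + y) = phi x + phi y.
Proof. by have := phi_antilinear 1 x y; rewrite scale1r conjC1 mul1r. Qed.

Lemma antilinearZ a x : phi (a *: x) = a^* * phi x.
Proof. by rewrite -[a *: x]addr0 phi_antilinear antilinear0 addr0. Qed.

Lemma Re_antilinear_le x : `|Re (phi x)| <= M * hn x.
Proof. exact: le_trans (Re_le_cabs _) (phi_bounded x). Qed.

(* The representative of [phi] minimises this energy functional. *)
Let energy x := Q x - 2 * Re (phi x).

Lemma energy_lb x : - M ^+ 2 <= energy x.
Proof.
rewrite /energy -(sqr_hnorm hb); have := Re_antilinear_le x.
have := ler_norm (Re (phi x)); have := sqr_ge0 (hn x - M); nra.
Qed.

Let energies := [set energy x | x in setT].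
Let emin := inf energies.

Lemma energies_has_inf : has_inf energies.
Proof.
split; first by exists (energy 0), 0.
by exists (- M ^+ 2) => _ [x _ <-]; exact: energy_lb.
Qed.

Lemma emin_le x : emin <= energy x.
Proof. by apply: (ge_inf (proj2 energies_has_inf)); exists x. Qed.

(* The parallelogram law at the midpoint of [x] and [y]. *)
Lemma energy_midpoint x y : Q (x - y) <= 2 * energy x + 2 * energy y - 4 * emin.
Proof.
set m := (2^-1 : R)%:C *: (x + y).
have Qm : Q m = 2^-1 ^+ 2 * Q (x + y).
  by rewrite /m (Re_ipZ hb) cabsR ger0_norm // invr_ge0 ler0n.
have phim : Re (phi m) = 2^-1 * (Re (phi x) + Re (phi y)).
  by rewrite /m antilinearZ conjcR Re_realM antilinearD ReD.
have := emin_le m; rewrite /energy Qm phim (Re_ipD hb) (Re_ipB hb); lra.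
Qed.

Lemma energy_minimizing_seq :
  exists u : nat -> V, forall n, energy (u n) < emin + n.+1%:R^-1.
Proof.
suff /choice[u u_min] : forall n : nat, exists x, energy x < emin + n.+1%:R^-1.
  by exists u.
move=> n; have n_gt0 : 0 < n.+1%:R^-1 :> R by rewrite invr_gt0 ltr0n.
by have [_ [x _ <-] ?] := inf_adherent n_gt0 energies_has_inf; exists x.
Qed.

Lemma minimizing_cauchy (u : nat -> V) :
  (forall n, energy (u n) < emin + n.+1%:R^-1) ->
  forall e : R, 0 < e -> exists N, forall k l, (N <= k)%N -> (N <= l)%N ->
    hn (u k - u l) < e.
Proof.
move=> u_min e e_gt0; have [N N_lt] := natSinv_lt (divr_gt0 (exprn_gt0 2 e_gt0) (ltr0n R 4)).
exists N => k l le_Nk le_Nl.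
rewrite -(ltr_pXn2r (n := 2)) ?nnegrE ?hnorm_ge0 ?(ltW e_gt0) // (sqr_hnorm hb).
have := energy_midpoint (u k) (u l); have := u_min k; have := u_min l.
have := natSinv_le R le_Nk; have := natSinv_le R le_Nl.
have -> : e ^+ 2 = 4 * (e ^+ 2 / 4) by field.
move: N_lt; move: (e ^+ 2 / 4) (k.+1%:R^-1) (l.+1%:R^-1) (N.+1%:R^-1) => *; lra.
Qed.

Lemma energy_le x y : energy y <= energy x + hn (y - x) * (hn x + hn y + 2 * `|M|).
Proof.
have dQ : Q y - Q x <= hn (y - x) * (hn x + hn y).
  rewrite -!(sqr_hnorm hb) subr_sqr [hn x + _]addrC ler_wpM2r ?addr_ge0 ?hnorm_ge0 //.
  exact: hnormB_ge.
have dphi : Re (phi x) - Re (phi y) <= `|M| * hn (y - x).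
  rewrite -ReB -[in phi x](subrK y x) antilinearD addrK -(hnormB hb x y).
  apply: le_trans (ler_norm _) (le_trans (Re_antilinear_le _) _).
  by rewrite ler_wpM2r ?hnorm_ge0 ?ler_norm.
rewrite /energy; move: dQ dphi; rewrite mulrDr [_ * `|M|]mulrC; lra.
Qed.

Lemma energy_min_attained : exists y0, energy y0 <= emin.
Proof.
have [u u_min] := energy_minimizing_seq.
have [y0 u_cvg] := b_complete (minimizing_cauchy u_min); exists y0.
apply/ler_addgt0Pr => e e_gt0.
set K := 2 * hn y0 + 1 + 2 * `|M|.
have K_gt0 : 0 < K by have := hnorm_ge0 b y0; have := normr_ge0 M; rewrite /K; lra.
have delta_gt0 : 0 < Num.min 1 (e / (2 * K)) by rewrite lt_min ltr01 divr_gt0 ?mulr_gt0.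
have [N1 N1_cvg] := u_cvg _ delta_gt0.
have [N2 N2_lt] := natSinv_lt (divr_gt0 e_gt0 (ltr0n R 2)).
set k := maxn N1 N2.
have close : hn (u k - y0) < Num.min 1 (e / (2 * K)) by apply: N1_cvg; rewrite /k leq_maxl.
have small : k.+1%:R^-1 < e / 2 by apply: le_lt_trans (natSinv_le R (leq_maxr N1 N2)) N2_lt.
have [close1 closeK] : hn (u k - y0) < 1 /\ hn (u k - y0) < e / (2 * K).
  by move: close; rewrite lt_min => /andP[].
have uk_le : hn (u k) <= hn y0 + 1.
  by have := hnormD hb y0 (u k - y0); rewrite addrC subrK; lra.
have := energy_le (u k) y0; rewrite (hnormB hb) => step.
have bound : hn (u k - y0) * (hn (u k) + hn y0 + 2 * `|M|) <= e / 2.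
  apply: le_trans (_ : hn (u k - y0) * K <= _).
    by apply: ler_wpM2l; [exact: hnorm_ge0 | rewrite /K; lra].
  by rewrite -ler_pdivlMr // -mulrA -invfM ltW.
move: step bound small (u_min k).
move: (hn (u k - y0) * _) (k.+1%:R^-1) => *; lra.
Qed.

Lemma riesz_representation : exists y, forall x, b y x = phi x.
Proof.
have [y0 y0_min] := energy_min_attained.
have Re_eq x : Re (b y0 x) = Re (phi x).
  apply/eqP; rewrite -subr_eq0 -sqrf_eq0 eq_le sqr_ge0 andbT.
  rewrite -[X in _ <= X](mulr0 (Q x)); apply: discriminant_le (Re_ip_ge0 hb x) _ => t.
  have := emin_le (t%:C *: x + y0).
  rewrite /energy (Re_ipD hb) (Re_ipZ hb) cabsR real_normK ?num_real // (ipZl hb) Re_realM.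
  rewrite phi_antilinear conjcR ReD Re_realM (Re_ipC hb).
  move: y0_min; rewrite /energy; lra.
exists y0 => x; apply: complex_eqP; first exact: Re_eq.
have := Re_eq ('i *: x).
by rewrite (ipZr hb) antilinearZ conjCi !Re_mulNi.
Qed.
End RieszRepresentation.

Section ComplexMeasurable.
Context {R : realType} {d : measure_display} {X : measurableType d}.
Implicit Types f g : X -> R[i].

Lemma cmeasurableD f g :
  cmeasurable f -> cmeasurable g -> cmeasurable (fun x => f x + g x).
Proof.
move=> [mf1 mf2] [mg1 mg2]; split.
  by under eq_fun do rewrite ReD; exact: measurable_funD.
by under eq_fun do rewrite ImD; exact: measurable_funD.
Qed.

Lemma cmeasurableM f g :
  cmeasurable f -> cmeasurable g -> cmeasurable (fun x => f x * g x).
Proof.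
move=> [mf1 mf2] [mg1 mg2]; split.
  by under eq_fun do rewrite ReM; apply: measurable_funB; exact: measurable_funM.
by under eq_fun do rewrite ImM; apply: measurable_funD; exact: measurable_funM.
Qed.

Lemma cmeasurableJ f : cmeasurable f -> cmeasurable (fun x => (f x)^*).
Proof.
move=> [mf1 mf2]; split; first by under eq_fun do rewrite ReJ.
by under eq_fun do rewrite ImJ; exact: measurableT_comp.
Qed.

Lemma cmeasurable_cst (a : R[i]) : cmeasurable (fun _ : X => a).
Proof. by split; exact: measurable_cst. Qed.

Lemma cmeasurableR (r : X -> R) : measurable_fun setT r -> cmeasurable (fun x => (r x)%:C).
Proof. by split => //; exact: measurable_cst. Qed.

Lemma measurable_cabs f : cmeasurable f -> measurable_fun setT (fun x => cabs (f x)).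
Proof.
move=> [mf1 mf2]; apply: measurableT_comp.
  exact: continuous_measurable_fun (@sqrt_continuous R).
by apply: measurable_funD; exact: measurable_funX.
Qed.

Lemma measurable_cabs2 f : cmeasurable f -> measurable_fun setT (fun x => cabs (f x) ^+ 2).
Proof. by move=> mf; apply: measurable_funX; exact: measurable_cabs. Qed.

Lemma measurable_inv_bounded_below (g : X -> R) (c : R) : 0 < c ->
  measurable_fun setT g -> (forall x, c <= g x) -> measurable_fun setT (fun x => (g x)^-1).
Proof.
move=> c_gt0 mg g_ge; apply: (measurable_comp (F := [set r : R | r != 0])) => //.
- exact: open_measurable.
- by move=> _ [x _ <-] /=; apply: contraTneq (g_ge x) => ->; rewrite -ltNge.
- apply: open_continuous_measurable_fun => //; apply/in_setP => x /= x_neq0.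
  exact: inv_continuous.
Qed.
End ComplexMeasurable.

Section ComplexIntegrable.
Context {R : realType} {d : measure_display} {X : measurableType d}.
Variable mu : {measure set X -> \bar R}.
Local Notation Re := complex.Re.
Local Notation Im := complex.Im.
Implicit Types (f g : X -> R[i]) (r s : X -> R).

Definition rintegrable r := mu.-integrable setT (EFin \o r).

Lemma rintegrable_eq r s : r =1 s -> rintegrable r -> rintegrable s.
Proof. by move=> rs; apply: eq_integrable => // x _ /=; rewrite rs. Qed.

Lemma rintegrable_measurable r : rintegrable r -> measurable_fun setT r.
Proof. by move=> /integrableP[/measurable_EFinP]. Qed.

Lemma rintegrable_le r s : measurable_fun setT r -> rintegrable s ->
  (forall x, `|r x| <= `|s x|) -> rintegrable r.
Proof.
move=> mr s_int r_le; apply: le_integrable s_int => //; first exact/measurable_EFinP.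
by move=> x _; rewrite /= lee_fin.
Qed.

Lemma rintegrableD r s : rintegrable r -> rintegrable s -> rintegrable (fun x => r x + s x).
Proof. by move=> r_int s_int; apply: rintegrable_eq (integrableD measurableT r_int s_int) => x. Qed.

Lemma rintegrableZ (k : R) r : rintegrable r -> rintegrable (fun x => k * r x).
Proof. by move=> r_int; apply: rintegrable_eq (integrableZl measurableT k r_int) => x. Qed.

Lemma rintegrableB r s : rintegrable r -> rintegrable s -> rintegrable (fun x => r x - s x).
Proof.
move=> r_int s_int; apply: rintegrable_eq (rintegrableD r_int (rintegrableZ (-1) s_int)) => x.
by rewrite mulN1r.
Qed.

Lemma rintegrable_ae r s : rintegrable r -> measurable_fun setT s ->
  {ae mu, forall x, r x = s x} -> rintegrable s.
Proof.
move=> /integrableP[mr r_fin] ms rs; apply/integrableP; split; first exact/measurable_EFinP.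
rewrite (@ge0_ae_eq_integral _ _ _ mu setT _ (fun x => `|(r x)%:E|)%E) //.
- by apply: measurableT_comp => //; exact/measurable_EFinP.
- exact: measurableT_comp.
- by apply: filterS rs => x -> _.
Qed.

Lemma Rintegral_ae r s : rintegrable r -> measurable_fun setT s ->
  {ae mu, forall x, r x = s x} -> \int[mu]_x r x = \int[mu]_x s x.
Proof.
move=> r_int ms rs; rewrite /Rintegral (@ae_eq_integral _ _ _ mu setT (EFin \o s) (EFin \o r)) //.
- exact/measurable_EFinP/rintegrable_measurable.
- exact/measurable_EFinP.
- by apply: filterS rs => x /= ->.
Qed.

Lemma le_Rintegral_ae r s : rintegrable r -> rintegrable s ->
  {ae mu, forall x, r x <= s x} -> \int[mu]_x r x <= \int[mu]_x s x.
Proof.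
move=> r_int s_int rs; rewrite -subr_ge0 -RintegralB //.
have sr_int := rintegrableB s_int r_int.
rewrite (Rintegral_ae sr_int (s := (fun x => s x - r x)^\+)).
- by apply: Rintegral_ge0 => x _; rewrite funrpos_ge0.
- exact/rintegrable_measurable/(integrable_funrpos measurableT sr_int).
- by apply: filterS rs => x sr; rewrite /funrpos (max_idPl _) // subr_ge0.
Qed.

Lemma Rintegral_EFin r : rintegrable r -> (\int[mu]_x (r x)%:E)%E = (\int[mu]_x r x)%:E.
Proof. by move=> r_int; rewrite /Rintegral fineK //; exact: integrable_fin_num. Qed.

Lemma cintegrable_measurable f : cintegrable mu f -> cmeasurable f.
Proof. by move=> [? ?]; split; exact: rintegrable_measurable. Qed.

Lemma cintegrable_eq f g : f =1 g -> cintegrable mu f -> cintegrable mu g.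
Proof. by move=> /funext->. Qed.

Lemma cintegrableD f g :
  cintegrable mu f -> cintegrable mu g -> cintegrable mu (fun x => f x + g x).
Proof.
move=> [f_int1 f_int2] [g_int1 g_int2]; split.
  by apply: rintegrable_eq (rintegrableD f_int1 g_int1) => x; rewrite ReD.
by apply: rintegrable_eq (rintegrableD f_int2 g_int2) => x; rewrite ImD.
Qed.

Lemma cintegrableZ (a : R[i]) f : cintegrable mu f -> cintegrable mu (fun x => a * f x).
Proof.
move=> [f_int1 f_int2]; split.
  apply: rintegrable_eq (rintegrableB (rintegrableZ (Re a) f_int1) (rintegrableZ (Im a) f_int2)).
  by move=> x; rewrite ReM.
apply: rintegrable_eq (rintegrableD (rintegrableZ (Re a) f_int2) (rintegrableZ (Im a) f_int1)).
by move=> x; rewrite ImM.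
Qed.

Lemma cintegrableJ f : cintegrable mu f -> cintegrable mu (fun x => (f x)^*).
Proof.
move=> [f_int1 f_int2]; split; first by apply: rintegrable_eq f_int1 => x; rewrite ReJ.
by apply: rintegrable_eq (rintegrableZ (-1) f_int2) => x; rewrite ImJ mulN1r.
Qed.

Lemma cintegrableB f g :
  cintegrable mu f -> cintegrable mu g -> cintegrable mu (fun x => f x - g x).
Proof.
move=> f_int g_int; apply: cintegrable_eq (cintegrableD f_int (cintegrableZ (-1) g_int)) => x.
by rewrite mulN1r.
Qed.

Lemma cintegrable_ae f g : cintegrable mu f -> cmeasurable g ->
  {ae mu, forall x, f x = g x} -> cintegrable mu g.
Proof.
move=> [f_int1 f_int2] [mg1 mg2] fg; split.
  by apply: (rintegrable_ae f_int1 mg1); apply: filterS fg => x ->.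
by apply: (rintegrable_ae f_int2 mg2); apply: filterS fg => x ->.
Qed.

Lemma cintegrable_cabs f : cintegrable mu f -> rintegrable (fun x => cabs (f x)).
Proof.
move=> [f_int1 f_int2]; apply: (rintegrable_le (s := fun x => `|Re (f x)| + `|Im (f x)|)).
- by apply: measurable_cabs; split; exact: rintegrable_measurable.
- by apply: rintegrableD; exact: integrable_norm.
- move=> x; rewrite ger0_norm ?cabs_ge0 // ger0_norm ?addr_ge0 //; exact: cabs_le_ReIm.
Qed.
End ComplexIntegrable.

Section SquareIntegrable.
Context {R : realType} {d : measure_display} {X : measurableType d}.
Variable mu : {measure set X -> \bar R}.
Local Notation Re := complex.Re.
Implicit Types (f g : X -> R[i]).

Definition square_integrable f := cmeasurable f /\ (sqint mu f < +oo)%E.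

Definition l2sqnorm f : R := \int[mu]_x (cabs (f x) ^+ 2).

Lemma l2sqnorm_ge0 f : 0 <= l2sqnorm f.
Proof. by apply: Rintegral_ge0 => x _; exact: sqr_ge0. Qed.

Lemma square_integrableP f :
  square_integrable f <-> cmeasurable f /\ rintegrable mu (fun x => cabs (f x) ^+ 2).
Proof.
have abs_sqr : (fun x => `|(cabs (f x) ^+ 2)%:E|)%E = (fun x => (cabs (f x) ^+ 2)%:E).
  by apply: funext => x; rewrite /= ger0_norm // sqr_ge0.
split=> [[mf f_fin] | [mf /integrableP[_]]]; last by rewrite abs_sqr.
split=> //; apply/integrableP; split; last by rewrite abs_sqr.
exact/measurable_EFinP/measurable_cabs2.
Qed.

Lemma square_integrable_sqr f :
  square_integrable f -> rintegrable mu (fun x => cabs (f x) ^+ 2).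
Proof. by case/square_integrableP. Qed.

Lemma sqintE f : square_integrable f -> sqint mu f = (l2sqnorm f)%:E.
Proof. by move/square_integrable_sqr/(Rintegral_EFin (mu := mu)). Qed.

Lemma square_integrable_eq_cabs f g : cmeasurable g ->
  (forall x, cabs (g x) = cabs (f x)) -> square_integrable f -> square_integrable g.
Proof.
move=> mg fg /square_integrable_sqr f_int; apply/square_integrableP; split=> //.
by apply: rintegrable_eq f_int => x; rewrite fg.
Qed.

Lemma sqint_ae_cabs f g : cmeasurable f -> cmeasurable g ->
  {ae mu, forall x, cabs (f x) = cabs (g x)} -> sqint mu f = sqint mu g.
Proof.
move=> mf mg fg; apply: ge0_ae_eq_integral => //.
- exact/measurable_EFinP/measurable_cabs2.
- exact/measurable_EFinP/measurable_cabs2.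
- by move=> x _; rewrite lee_fin sqr_ge0.
- by move=> x _; rewrite lee_fin sqr_ge0.
- by apply: filterS fg => x -> _.
Qed.

Lemma square_integrable_mul f g : square_integrable f -> square_integrable g ->
  cintegrable mu (fun x => f x * g x).
Proof.
move=> f_l2 g_l2; have [mfg1 mfg2] := cmeasurableM f_l2.1 g_l2.1.
have sum_int := rintegrableD (square_integrable_sqr f_l2) (square_integrable_sqr g_l2).
have amgm x : cabs (f x * g x) <= `|cabs (f x) ^+ 2 + cabs (g x) ^+ 2|.
  rewrite cabsM ger0_norm ?addr_ge0 ?sqr_ge0 //.
  have := sqr_ge0 (cabs (f x) - cabs (g x)); have := cabs_ge0 (f x); have := cabs_ge0 (g x).
  nra.
split; apply: (rintegrable_le _ sum_int) => // x; apply: le_trans (amgm x).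
  exact: Re_le_cabs.
exact: Im_le_cabs.
Qed.

Lemma square_integrableD f g : square_integrable f -> square_integrable g ->
  square_integrable (fun x => f x + g x).
Proof.
move=> f_l2 g_l2; have mfg := cmeasurableD f_l2.1 g_l2.1.
apply/square_integrableP; split=> //.
have sum_int := rintegrableZ 2 (rintegrableD (square_integrable_sqr f_l2) (square_integrable_sqr g_l2)).
apply: (rintegrable_le (measurable_cabs2 mfg) sum_int) => x.
rewrite ger0_norm ?sqr_ge0 // ger0_norm ?mulr_ge0 ?addr_ge0 ?sqr_ge0 //.
have := cabsD (f x) (g x); have := cabs_ge0 (f x + g x).
have := cabs_ge0 (f x); have := cabs_ge0 (g x).
move: (cabs (f x + g x)) (cabs (f x)) (cabs (g x)) => a b c c_ge0 b_ge0 a_ge0 le_abc.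
have : a * a <= (b + c) * (b + c) by apply: ler_pM.
have := sqr_ge0 (b - c); rewrite !expr2; lra.
Qed.

Lemma square_integrableZ (a : R[i]) f : square_integrable f ->
  square_integrable (fun x => a * f x).
Proof.
move=> f_l2; apply/square_integrableP; split; first exact: cmeasurableM (cmeasurable_cst a) f_l2.1.
by apply: rintegrable_eq (rintegrableZ (cabs a ^+ 2) (square_integrable_sqr f_l2)) => x;
  rewrite cabsM exprMn.
Qed.

Lemma square_integrableJ f : square_integrable f -> square_integrable (fun x => (f x)^*).
Proof.
move=> f_l2; apply: square_integrable_eq_cabs (cmeasurableJ f_l2.1) _ f_l2.
by move=> x; rewrite cabsJ.
Qed.

Lemma square_integrableB f g : square_integrable f -> square_integrable g ->
  square_integrable (fun x => f x - g x).
Proof.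
move=> f_l2 g_l2; have := square_integrableD f_l2 (square_integrableZ (-1) g_l2).
by under eq_fun do rewrite mulN1r.
Qed.

Lemma cintegralD f g : cintegrable mu f -> cintegrable mu g ->
  cintegral mu (fun x => f x + g x) = cintegral mu f + cintegral mu g.
Proof.
move=> [f_int1 f_int2] [g_int1 g_int2]; apply: complex_eqP => /=.
  by under eq_Rintegral do rewrite ReD; rewrite RintegralD.
by under eq_Rintegral do rewrite ImD; rewrite RintegralD.
Qed.

Lemma cintegralZ (a : R[i]) f : cintegrable mu f ->
  cintegral mu (fun x => a * f x) = a * cintegral mu f.
Proof.
move=> [f_int1 f_int2]; apply: complex_eqP; rewrite ?ReM ?ImM /=.
  under eq_Rintegral do rewrite ReM.
  by rewrite RintegralB ?RintegralZl //; exact: rintegrableZ.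
under eq_Rintegral do rewrite ImM.
by rewrite RintegralD ?RintegralZl //; exact: rintegrableZ.
Qed.

Lemma cintegralJ f : cintegrable mu f ->
  cintegral mu (fun x => (f x)^*) = (cintegral mu f)^*.
Proof.
move=> [f_int1 f_int2]; apply: complex_eqP; rewrite ?ReJ ?ImJ /=.
  by under eq_Rintegral do rewrite ReJ.
under eq_Rintegral do rewrite ImJ -mulN1r.
by rewrite RintegralZl // -[RHS]mulN1r.
Qed.

Lemma cintegralB f g : cintegrable mu f -> cintegrable mu g ->
  cintegral mu (fun x => f x - g x) = cintegral mu f - cintegral mu g.
Proof.
move=> f_int g_int.
have -> : (fun x => f x - g x) = (fun x => f x + (-1) * g x).
  by apply: funext => x; rewrite mulN1r.
by rewrite cintegralD ?cintegralZ ?mulN1r //; exact: cintegrableZ.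
Qed.

Lemma cintegral_ae f g : cintegrable mu f -> cmeasurable g ->
  {ae mu, forall x, f x = g x} -> cintegral mu f = cintegral mu g.
Proof.
move=> [f_int1 f_int2] [mg1 mg2] fg; rewrite /cintegral.
by rewrite (Rintegral_ae f_int1 mg1) ?(Rintegral_ae f_int2 mg2) //; apply: filterS fg => x ->.
Qed.

Lemma cintegral_real (r : X -> R) : cintegral mu (fun x => (r x)%:C) = (\int[mu]_x r x)%:C.
Proof. by rewrite /cintegral /= Rintegral_cst // mul0r. Qed.

Lemma cabs_cintegral_le f : cintegrable mu f ->
  cabs (cintegral mu f) <= \int[mu]_x cabs (f x).
Proof.
move=> f_int; set z := cintegral mu f.
have [->|z_neq0] := eqVneq (cabs z) 0.
  by apply: Rintegral_ge0 => x _; exact: cabs_ge0.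
have z_gt0 : 0 < cabs z by rewrite lt_def z_neq0 cabs_ge0.
have zf_int := cintegrableZ z^* f_int.
have Re_le : Re (cintegral mu (fun x => z^* * f x)) <= \int[mu]_x cabs (z^* * f x).
  apply: le_Rintegral => //; [exact: zf_int.1 | exact: cintegrable_cabs |].
  by move=> x _; apply: le_trans (Re_le_cabs _); exact: ler_norm.
move: Re_le; rewrite cintegralZ // -/z mulrC mulcJ_cabs /=.
under eq_Rintegral do rewrite cabsM cabsJ.
by rewrite RintegralZl ?expr2 ?ler_pM2l //; exact: cintegrable_cabs.
Qed.

Lemma l2_cauchy_schwarz f g : square_integrable f -> square_integrable g ->
  \int[mu]_x (cabs (f x) * cabs (g x)) <= Num.sqrt (l2sqnorm f) * Num.sqrt (l2sqnorm g).
Proof.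
move=> f_l2 g_l2.
have fg_int : rintegrable mu (fun x => cabs (f x) * cabs (g x)).
  by apply: rintegrable_eq (cintegrable_cabs (square_integrable_mul f_l2 g_l2)) => x; rewrite cabsM.
have quad_ge0 t : 0 <= t ^+ 2 * l2sqnorm f + 2 * t * \int[mu]_x (cabs (f x) * cabs (g x)) + l2sqnorm g.
  have -> : t ^+ 2 * l2sqnorm f + 2 * t * \int[mu]_x (cabs (f x) * cabs (g x)) + l2sqnorm g =
      \int[mu]_x (t ^+ 2 * cabs (f x) ^+ 2 + 2 * t * (cabs (f x) * cabs (g x)) + cabs (g x) ^+ 2).
    have f2_int := square_integrable_sqr f_l2; have g2_int := square_integrable_sqr g_l2.
    rewrite !RintegralD ?RintegralZl //; do ?exact: rintegrableZ.
    exact: rintegrableD (rintegrableZ _ _) (rintegrableZ _ _).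
  apply: Rintegral_ge0 => x _.
  have -> : t ^+ 2 * cabs (f x) ^+ 2 + 2 * t * (cabs (f x) * cabs (g x)) + cabs (g x) ^+ 2 =
      (t * cabs (f x) + cabs (g x)) ^+ 2 by ring.
  exact: sqr_ge0.
apply: ler_of_sqr; first by rewrite mulr_ge0 ?sqrtr_ge0.
by rewrite exprMn !sqr_sqrtr ?l2sqnorm_ge0 //; exact: discriminant_le (l2sqnorm_ge0 f) quad_ge0.
Qed.
End SquareIntegrable.

Section SquareSummableDomination.
Context {R : realType} {d : measure_display} {X : measurableType d}.
Variable mu : {measure set X -> \bar R}.
Variable dk : nat -> X -> R[i].
Hypothesis dk_l2 : forall k, square_integrable mu (dk k).
Hypothesis dk_small : forall k, k.+1%:R ^+ 2 * l2sqnorm mu (dk k) <= (2 ^ k.+1)%:R^-1.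

Let wterm k x : \bar R := (k.+1%:R ^+ 2 * cabs (dk k x) ^+ 2)%:E.
Let wsum x : \bar R := (\sum_(k <oo) wterm k x)%E.

Lemma wterm_ge0 k x : (0 <= wterm k x)%E.
Proof. by rewrite lee_fin mulr_ge0 ?sqr_ge0. Qed.

Lemma wterm_measurable k : measurable_fun setT (wterm k).
Proof. exact/measurable_EFinP/measurable_funM/measurable_cabs2/(dk_l2 k).1. Qed.

Lemma wsum_ge0 x : (0 <= wsum x)%E.
Proof. by apply: nneseries_ge0 => k _ _; exact: wterm_ge0. Qed.

Lemma wsum_integrable : mu.-integrable setT wsum.
Proof.
have m_wsum : measurable_fun setT wsum.
  exact: ge0_emeasurable_sum (fun k x _ _ => wterm_ge0 k x) (fun k _ => wterm_measurable k).
apply/integrableP; split=> //.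
rewrite (_ : (fun x => `|wsum x|)%E = wsum); last by apply: funext => x; rewrite gee0_abs ?wsum_ge0.
rewrite (integral_nneseries mu measurableT wterm_measurable (fun k x _ => wterm_ge0 k x)).
apply: le_lt_trans (ltry 1); apply: le_trans (epsilon_trick0 xpredT (@ler01 R)).
apply: lee_nneseries => [k _ _|k _]; first by apply: integral_ge0 => x _; exact: wterm_ge0.
have k2_int := rintegrableZ (k.+1%:R ^+ 2) (square_integrable_sqr (dk_l2 k)).
by rewrite Rintegral_EFin // RintegralZl ?lee_fin ?div1r //; exact: square_integrable_sqr.
Qed.

(* The pointwise bounds hold wherever the series [wsum] is finite, i.e. almost everywhere. *)
Lemma square_summable_domination : exists G : X -> R,
  [/\ square_integrable mu (fun x => (G x)%:C), forall x, 0 <= G x &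
      {ae mu, forall x k, k.+1%:R * cabs (dk k x) <= G x}].
Proof.
have m_wsum := measurable_int _ wsum_integrable.
have fine_wsum_ge0 x : 0 <= fine (wsum x) by exact/fine_ge0/wsum_ge0.
exists (fun x => Num.sqrt (fine (wsum x))); split.
- apply/square_integrableP; split.
    apply: cmeasurableR; apply: measurableT_comp (measurableT_comp _ m_wsum) => //.
    exact: continuous_measurable_fun (@sqrt_continuous R).
  apply: (rintegrable_eq (r := fine \o wsum)) => [x|]; first by rewrite cabsR ger0_norm ?sqr_sqrtr.
  apply: le_integrable wsum_integrable => //; first exact/measurable_EFinP/measurableT_comp.
  move=> x _; rewrite /= ger0_norm // gee0_abs ?wsum_ge0 //.
  by case: (wsum x) (wsum_ge0 x) => //= r; rewrite lee_fin.
- by move=> x; exact: sqrtr_ge0.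
- apply: filterS (integrable_ae measurableT wsum_integrable) => x /(_ I) wsum_fin k.
  have wterm_le : (wterm k x <= wsum x)%E.
    apply: le_trans (nneseries_lim_ge k.+1 (fun n _ _ => wterm_ge0 n x)).
    by rewrite big_nat_recr //= leeDr // sume_ge0 // => n _; exact: wterm_ge0.
  apply: ler_of_sqr; first exact: sqrtr_ge0.
  by rewrite exprMn [in X in _ <= X]sqr_sqrtr // -lee_fin fineK.
Qed.
End SquareSummableDomination.

Section AnalysisOperator.
Context {R : realType} {D H : lmodType R[i]} {d : measure_display} {X : measurableType d}.
Variables (ip : H -> H -> R[i]) (iota : D -> H) (mu : {measure set X -> \bar R}).
Hypothesis ip_hilbert : is_hilbert ip.
Hypothesis iota_dense : forall h (e : R), 0 < e -> exists f, hnorm ip (h - iota f) < e.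
Variables (omega : X -> D -> R[i]) (T : H -> X -> R[i]) (A K : R).
Hypothesis A_gt0 : 0 < A.
Hypothesis omega_measurable : forall f, cmeasurable (fun x => omega x f).
Hypothesis omega_lower :
  forall f, ((A * hnorm ip (iota f) ^+ 2)%:E <= sqint mu (fun x => omega x f))%E.
Hypothesis T_iota : forall f, {ae mu, forall x, T (iota f) x = (omega x f)^*}.
Hypothesis T_measurable : forall h, cmeasurable (T h).
Hypothesis T_bounded : forall h, (sqint mu (T h) <= (K * hnorm ip h ^+ 2)%:E)%E.
Hypothesis T_linear : forall (a : R[i]) h1 h2,
  {ae mu, forall x, T (a *: h1 + h2) x = a * T h1 x + T h2 x}.
Local Notation hn := (hnorm ip).
Let ip_sip := inner_product_semi ip_hilbert.1.

Lemma T_square_integrable h : square_integrable mu (T h).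
Proof. by split=> //; apply: le_lt_trans (T_bounded h) (ltry _). Qed.

Lemma l2sqnorm_T_le h : l2sqnorm mu (T h) <= `|K| * hn h ^+ 2.
Proof.
have := T_bounded h; rewrite (sqintE (T_square_integrable h)) lee_fin => /le_trans; apply.
by rewrite ler_wpM2r ?sqr_ge0 ?ler_norm.
Qed.

Lemma l2sqnorm_T_iota f : A * hn (iota f) ^+ 2 <= l2sqnorm mu (T (iota f)).
Proof.
rewrite -lee_fin -(sqintE (T_square_integrable _)); apply: le_trans (omega_lower f) _.
rewrite (@sqint_ae_cabs _ _ _ mu _ (T (iota f))) //.
by apply: filterS (T_iota f) => x ->; rewrite cabsJ.
Qed.

Definition Tform h1 h2 := cintegral mu (fun x => T h1 x * (T h2 x)^*).

Lemma Tform_integrable h1 h2 : cintegrable mu (fun x => T h1 x * (T h2 x)^*).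
Proof. exact: square_integrable_mul (T_square_integrable _) (square_integrableJ (T_square_integrable _)). Qed.

Lemma Tform_semi_inner_product : is_semi_inner_product Tform.
Proof.
split=> [a h1 h2 h3 | h1 h2 | h].
- rewrite /Tform (@cintegral_ae _ _ _ mu _ (fun x => a * (T h1 x * (T h3 x)^*) + T h2 x * (T h3 x)^*)).
  + rewrite cintegralD ?cintegralZ //;
      by [apply: cintegrableZ; exact: Tform_integrable | exact: Tform_integrable].
  + exact: Tform_integrable.
  + exact: cintegrable_measurable
      (cintegrableD (cintegrableZ a (Tform_integrable h1 h3)) (Tform_integrable h2 h3)).
  + by apply: filterS (T_linear a h1 h2) => x ->; rewrite mulrDl mulrA.
- rewrite /Tform -cintegralJ; last exact: Tform_integrable.
  by congr cintegral; apply: funext => x; rewrite conjcM conjCK mulrC.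
- rewrite /Tform (_ : (fun x => _) = (fun x => (cabs (T h x) ^+ 2)%:C)).
    by rewrite cintegral_real lecR l2sqnorm_ge0.
  by apply: funext => x; rewrite mulcJ_cabs.
Qed.

Lemma hnorm_Tform h : hnorm Tform h = Num.sqrt (l2sqnorm mu (T h)).
Proof.
rewrite /hnorm /Tform (_ : (fun x => _) = (fun x => (cabs (T h x) ^+ 2)%:C)).
  by rewrite cintegral_real.
by apply: funext => x; rewrite mulcJ_cabs.
Qed.

Lemma hnorm_Tform_le h : hnorm Tform h <= Num.sqrt `|K| * hn h.
Proof.
have -> : Num.sqrt `|K| * hn h = Num.sqrt (`|K| * hn h ^+ 2).
  by rewrite sqrtrM // sqrtr_sqr (ger0_norm (hnorm_ge0 _ _)).
rewrite hnorm_Tform ler_sqrt ?mulr_ge0 ?sqr_ge0 ?hnorm_ge0 //; exact: l2sqnorm_T_le.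
Qed.

Lemma hnorm_Tform_iota f : Num.sqrt A * hn (iota f) <= hnorm Tform (iota f).
Proof.
have -> : Num.sqrt A * hn (iota f) = Num.sqrt (A * hn (iota f) ^+ 2).
  by rewrite sqrtrM ?(ltW A_gt0) // sqrtr_sqr (ger0_norm (hnorm_ge0 _ _)).
rewrite hnorm_Tform ler_sqrt ?l2sqnorm_ge0 //; exact: l2sqnorm_T_iota.
Qed.

(* The frame lower bound holds on the dense subspace [iota D] and both sides are continuous. *)
Lemma Tform_coercive h : Num.sqrt A * hn h <= hnorm Tform h.
Proof.
apply: (@ler_scaled_eps _ _ _ (Num.sqrt A + Num.sqrt `|K|)); first by rewrite addr_ge0 ?sqrtr_ge0.
move=> e e_gt0; have [f hf_lt] := iota_dense h e_gt0.
have near_h : hn h <= hn (iota f) + e.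
  by have := hnormD ip_sip (iota f) (h - iota f); rewrite addrC subrK; lra.
have near_Th : hnorm Tform (iota f) <= hnorm Tform h + Num.sqrt `|K| * e.
  have := hnormD Tform_semi_inner_product h (iota f - h); rewrite addrC subrK.
  have := hnorm_Tform_le (iota f - h); rewrite (hnormB ip_sip) => le_K.
  have : Num.sqrt `|K| * hn (h - iota f) <= Num.sqrt `|K| * e by rewrite ler_wpM2l ?sqrtr_ge0 ?ltW.
  lra.
have := hnorm_Tform_iota f; have : Num.sqrt A * hn h <= Num.sqrt A * (hn (iota f) + e).
  by rewrite ler_wpM2l ?sqrtr_ge0.
rewrite mulrDr mulrDl; lra.
Qed.

Lemma Tform_complete : complete_for Tform.
Proof.
move=> u u_cauchy; have sA_gt0 : 0 < Num.sqrt A by rewrite sqrtr_gt0.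
have [|h u_cvg] := ip_hilbert.2 u.
  move=> e e_gt0; have [N N_cauchy] := u_cauchy _ (mulr_gt0 sA_gt0 e_gt0).
  exists N => k l le_Nk le_Nl; rewrite -(ltr_pM2l sA_gt0).
  exact: le_lt_trans (Tform_coercive _) (N_cauchy _ _ le_Nk le_Nl).
exists h => e e_gt0.
have sK_gt0 : 0 < Num.sqrt `|K| + 1 by rewrite ltr_wpDl ?sqrtr_ge0.
have [N N_cvg] := u_cvg _ (divr_gt0 e_gt0 sK_gt0); exists N => k le_Nk.
apply: le_lt_trans (hnorm_Tform_le _) _; have := N_cvg _ le_Nk; rewrite ltr_pdivlMr //.
apply: le_lt_trans; rewrite mulrC.
by apply: ler_wpM2l; [exact: hnorm_ge0 | rewrite lerDl].
Qed.

Hypothesis omega_finite : forall f, (sqint mu (fun x => omega x f) < +oo)%E.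
Hypothesis omega_independent : mu_independent mu omega.

Definition Tcoef (v : X -> R[i]) z := cintegral mu (fun x => v x * (T z x)^*).

Lemma Tcoef_antilinear (v : X -> R[i]) : (forall z, cintegrable mu (fun x => v x * (T z x)^*)) ->
  forall (a : R[i]) z1 z2, Tcoef v (a *: z1 + z2) = a^* * Tcoef v z1 + Tcoef v z2.
Proof.
move=> v_int a z1 z2; have vz1_int := cintegrableZ a^* (v_int z1).
rewrite /Tcoef (@cintegral_ae _ _ _ mu _ (fun x => a^* * (v x * (T z1 x)^*) + v x * (T z2 x)^*)).
- by rewrite cintegralD ?cintegralZ.
- exact: v_int.
- exact: cintegrable_measurable (cintegrableD vz1_int (v_int z2)).
- apply: filterS (T_linear a z1 z2) => x ->.
  by rewrite conjcD conjcM mulrDr mulrCA.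
Qed.

Lemma Tcoef_bounded v : square_integrable mu v ->
  forall z, cabs (Tcoef v z) <= Num.sqrt (l2sqnorm mu v) * hnorm Tform z.
Proof.
move=> v_l2 z; have TzJ_l2 := square_integrableJ (T_square_integrable z).
apply: le_trans (cabs_cintegral_le (square_integrable_mul v_l2 TzJ_l2)) _.
under eq_Rintegral do rewrite cabsM.
apply: le_trans (l2_cauchy_schwarz v_l2 TzJ_l2) _.
have -> : l2sqnorm mu (fun x => (T z x)^*) = l2sqnorm mu (T z).
  by apply: eq_Rintegral => x _; rewrite cabsJ.
by rewrite hnorm_Tform.
Qed.

(* mu-independence of [omega] says exactly that [T (iota D)] has trivial orthogonal complement. *)
Lemma Tcoef_iota_eq0 w : square_integrable mu w ->
  (forall g, Tcoef w (iota g) = 0) -> {ae mu, forall x, w x = 0}.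
Proof.
move=> w_l2 w_orth.
suff : {ae mu, forall x, (w x)^* = 0}.
  by apply: filterS => x /eqP; rewrite conjC_eq0 => /eqP.
apply: omega_independent; first exact: cmeasurableJ w_l2.1.
move=> g; have omega_l2 : square_integrable mu (fun x => omega x g) by split.
have wg_int := square_integrable_mul w_l2 omega_l2.
under eq_fun do rewrite -conjcM.
split; first exact: cintegrableJ.
rewrite cintegralJ // -[RHS]conjC0 -(w_orth g); congr (_^*); apply: esym.
apply: cintegral_ae.
- exact: square_integrable_mul w_l2 (square_integrableJ (T_square_integrable _)).
- exact: cintegrable_measurable wg_int.
- by apply: filterS (T_iota g) => x ->; rewrite conjCK.
Qed.

Lemma T_onto v : square_integrable mu v -> exists y,
  {ae mu, forall x, T y x = v x} /\ Num.sqrt A * hn y <= Num.sqrt (l2sqnorm mu v).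
Proof.
move=> v_l2.
have v_int z := square_integrable_mul v_l2 (square_integrableJ (T_square_integrable z)).
have [y y_repr] := riesz_representation Tform_semi_inner_product Tform_complete
  (Tcoef_antilinear v_int) (Tcoef_bounded v_l2).
have w_l2 := square_integrableB v_l2 (T_square_integrable y).
have Ty_v : {ae mu, forall x, v x - T y x = 0}.
  apply: Tcoef_iota_eq0 => // g; rewrite /Tcoef.
  under eq_fun do rewrite mulrBl.
  rewrite cintegralB; [|exact: v_int|exact: Tform_integrable].
  by move: (y_repr (iota g)); rewrite /Tform /Tcoef => ->; rewrite subrr.
exists y; split; first by apply: filterS Ty_v => x /eqP; rewrite subr_eq0 => /eqP.
apply: le_trans (Tform_coercive y) _; rewrite hnorm_Tform /l2sqnorm.
rewrite (Rintegral_ae (square_integrable_sqr (T_square_integrable y)) (measurable_cabs2 v_l2.1)) //.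
by apply: filterS Ty_v => x /eqP; rewrite subr_eq0 => /eqP->.
Qed.

Lemma T_iota_approx y (e : R) : 0 < e -> exists g,
  hn (y - iota g) < e /\ l2sqnorm mu (fun x => T y x - T (iota g) x) < e.
Proof.
move=> e_gt0; have K1_gt0 : 0 < `|K| + 1 by rewrite ltr_wpDl.
set t := e / (`|K| + 1); have t_gt0 : 0 < t by rewrite divr_gt0.
have delta_gt0 : 0 < Num.min e (Num.sqrt t) by rewrite lt_min e_gt0 sqrtr_gt0.
have [g g_close] := iota_dense y delta_gt0.
exists g; split; first by apply: lt_le_trans g_close _; rewrite ge_min lexx.
have Tdiff : {ae mu, forall x, T (y - iota g) x = T y x - T (iota g) x}.
  apply: filterS (T_linear (-1) (iota g) y) => x.
  by rewrite scaleN1r mulN1r [- iota g + _]addrC [- T _ x + _]addrC.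
rewrite /l2sqnorm -(Rintegral_ae (square_integrable_sqr (T_square_integrable (y - iota g)))) //; last first.
- by apply: filterS Tdiff => x ->.
- exact: measurable_cabs2 (square_integrableB (T_square_integrable _) (T_square_integrable _)).1.
apply: le_lt_trans (l2sqnorm_T_le _) _.
have hn_lt : hn (y - iota g) ^+ 2 < t.
  rewrite -(sqr_sqrtr (ltW t_gt0)) ltr_pXn2r ?nnegrE ?hnorm_ge0 ?sqrtr_ge0 //.
  by apply: lt_le_trans g_close _; rewrite ge_min lexx orbT.
apply: le_lt_trans (_ : `|K| * t < e); last by rewrite /t mulrCA gtr_pMr // ltr_pdivrMr // mul1r ltrDl.
by rewrite ler_wpM2l // ltW.
Qed.

Lemma T_iota_fast_approx y : exists gs : nat -> D, forall k,
  hn (y - iota (gs k)) < k.+1%:R^-1 /\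
  k.+1%:R ^+ 2 * l2sqnorm mu (fun x => T y x - T (iota (gs k)) x) <= (2 ^ k.+1)%:R^-1.
Proof.
suff /choice[gs gs_approx] : forall k, exists g, hn (y - iota g) < k.+1%:R^-1 /\
  k.+1%:R ^+ 2 * l2sqnorm mu (fun x => T y x - T (iota g) x) <= (2 ^ k.+1)%:R^-1.
  by exists gs.
move=> k; have k2_gt0 : 0 < k.+1%:R ^+ 2 :> R by rewrite exprn_gt0 ?ltr0n.
have pow_gt0 : 0 < (2 ^ k.+1)%:R :> R by rewrite ltr0n expn_gt0.
pose e : R := Num.min k.+1%:R^-1 (k.+1%:R ^+ 2 * (2 ^ k.+1)%:R)^-1.
have e_gt0 : 0 < e by rewrite lt_min !invr_gt0 ltr0n mulr_gt0.
have [g [g_close g_small]] := T_iota_approx y e_gt0; exists g; split.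
  by apply: lt_le_trans g_close _; rewrite ge_min lexx.
have -> : (2 ^ k.+1)%:R^-1 = k.+1%:R ^+ 2 * (k.+1%:R ^+ 2 * (2 ^ k.+1)%:R)^-1 :> R.
  by rewrite invfM mulrA divff ?mul1r // gt_eqF.
rewrite ler_pM2l //; apply/ltW/(lt_le_trans g_small).
by rewrite ge_min lexx orbT.
Qed.

(* Approximate [y] fast enough by [iota D] for the errors to be dominated by a single
   function [G] of L^2; since [T] is onto, [G = T z] and the hypothesis on [u] makes
   [|u| G] integrable, which controls the convergence of [Tcoef u]. *)
Lemma Tcoef_iota_extend (u : X -> R[i]) (h : H) : cmeasurable u ->
  (forall z, cintegrable mu (fun x => u x * (T z x)^*)) ->
  (forall g, Tcoef u (iota g) = ip h (iota g)) ->
  forall y, Tcoef u y = ip h y.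
Proof.
move=> u_meas u_int u_iota y.
have [gs gs_approx] := T_iota_fast_approx y.
pose dk k x := T y x - T (iota (gs k)) x.
have dk_l2 k : square_integrable mu (dk k).
  exact: square_integrableB (T_square_integrable _) (T_square_integrable _).
have [G [G_l2 G_ge0 G_dom]] := square_summable_domination dk_l2 (fun k => (gs_approx k).2).
have [z [Tz_G _]] := T_onto G_l2.
have uG_int : rintegrable mu (fun x => cabs (u x) * G x).
  apply: (rintegrable_ae (cintegrable_cabs (u_int z))).
    exact: measurable_funM (measurable_cabs u_meas) G_l2.1.1.
  by apply: filterS Tz_G => x ->; rewrite cabsM cabsJ cabsR ger0_norm ?G_ge0.
set I := \int[mu]_x (cabs (u x) * G x).
have I_ge0 : 0 <= I by apply: Rintegral_ge0 => x _; rewrite mulr_ge0 ?cabs_ge0.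
have Tcoef_err k : cabs (Tcoef u y - Tcoef u (iota (gs k))) <= I * k.+1%:R^-1.
  have udk_int : cintegrable mu (fun x => u x * (dk k x)^*).
    apply: cintegrable_eq (cintegrableB (u_int y) (u_int (iota (gs k)))) => x.
    by rewrite /dk conjcB mulrBr.
  rewrite /Tcoef -cintegralB //; under eq_fun do rewrite -mulrBr -conjcB.
  apply: le_trans (cabs_cintegral_le udk_int) _; rewrite mulrC -RintegralZl //.
  apply: le_Rintegral_ae; [exact: cintegrable_cabs | exact: rintegrableZ |].
  apply: filterS G_dom => x /(_ k) dk_le; rewrite cabsM cabsJ mulrCA ler_wpM2l ?cabs_ge0 //.
  by rewrite ler_pdivlMl ?ltr0n.
have ip_err k : cabs (ip h y - ip h (iota (gs k))) <= hn h * k.+1%:R^-1.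
  rewrite -(ipBr ip_sip); apply: le_trans (cabs_ip_le ip_sip _ _) _.
  by rewrite ler_wpM2l ?hnorm_ge0 // ltW // (gs_approx k).1.
apply/eqP; rewrite -subr_eq0 -cabs_eq0 eq_le cabs_ge0 andbT.
apply: (le0_natSinv (c := I + hn h)); first by rewrite addr_ge0 ?hnorm_ge0.
move=> k; have -> : Tcoef u y - ip h y =
    (Tcoef u y - Tcoef u (iota (gs k))) - (ip h y - ip h (iota (gs k))).
  by rewrite u_iota opprB addrA subrK.
by apply: le_trans (cabsD _ _) _; rewrite cabsN mulrDl lerD.
Qed.
End AnalysisOperator.

Section MultiplierLowerBound.
Context {R : realType} {D H : lmodType R[i]} {d : measure_display} {X : measurableType d}.
Variables (ip : H -> H -> R[i]) (iota : D -> H) (mu : {measure set X -> \bar R}).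
Hypothesis ip_hilbert : is_hilbert ip.
Hypothesis iota_dense : forall h (e : R), 0 < e -> exists f, hnorm ip (h - iota f) < e.
Variables (omega theta : X -> D -> R[i]) (Tomega Ttheta : H -> X -> R[i]).
Variables (Aw At Kw Kt C : R) (m : X -> R[i]).
Hypothesis Aw_gt0 : 0 < Aw.
Hypothesis At_gt0 : 0 < At.
Hypothesis omega_measurable : forall f, cmeasurable (fun x => omega x f).
Hypothesis theta_measurable : forall f, cmeasurable (fun x => theta x f).
Hypothesis omega_lower :
  forall f, ((Aw * hnorm ip (iota f) ^+ 2)%:E <= sqint mu (fun x => omega x f))%E.
Hypothesis theta_lower :
  forall f, ((At * hnorm ip (iota f) ^+ 2)%:E <= sqint mu (fun x => theta x f))%E.
Hypothesis theta_finite : forall f, (sqint mu (fun x => theta x f) < +oo)%E.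
Hypothesis theta_independent : mu_independent mu theta.
Hypothesis Tomega_iota : forall f, {ae mu, forall x, Tomega (iota f) x = (omega x f)^*}.
Hypothesis Tomega_measurable : forall h, cmeasurable (Tomega h).
Hypothesis Tomega_bounded : forall h, (sqint mu (Tomega h) <= (Kw * hnorm ip h ^+ 2)%:E)%E.
Hypothesis Ttheta_iota : forall f, {ae mu, forall x, Ttheta (iota f) x = (theta x f)^*}.
Hypothesis Ttheta_measurable : forall h, cmeasurable (Ttheta h).
Hypothesis Ttheta_bounded : forall h, (sqint mu (Ttheta h) <= (Kt * hnorm ip h ^+ 2)%:E)%E.
Hypothesis Ttheta_linear : forall (a : R[i]) h1 h2,
  {ae mu, forall x, Ttheta (a *: h1 + h2) x = a * Ttheta h1 x + Ttheta h2 x}.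
Hypothesis m_measurable : cmeasurable m.
Hypothesis m_integrable :
  forall f g : H, cintegrable mu (fun x => m x * Tomega f x * (Ttheta g x)^*).
Hypothesis C_gt0 : 0 < C.
Hypothesis m_ge : forall x, C <= cabs (m x).
Local Notation Re := complex.Re.
Local Notation hn := (hnorm ip).
Let ip_sip := inner_product_semi ip_hilbert.1.

Let Ttheta_extend := Tcoef_iota_extend ip_hilbert iota_dense At_gt0 theta_measurable theta_lower
  Ttheta_iota Ttheta_measurable Ttheta_bounded Ttheta_linear theta_finite theta_independent.
Let Ttheta_onto := T_onto ip_hilbert iota_dense At_gt0 theta_measurable theta_lower
  Ttheta_iota Ttheta_measurable Ttheta_bounded Ttheta_linear theta_finite theta_independent.

Lemma Tcoef_multiplier f h : is_mult_value ip iota mu m omega theta f h ->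
  forall y, Tcoef mu Ttheta (fun x => m x * Tomega (iota f) x) y = ip h y.
Proof.
move=> Mf_h; apply: Ttheta_extend => [|z|g]; first exact: cmeasurableM.
  exact: m_integrable.
rewrite Mf_h /Tcoef /mult_integrand; apply: cintegral_ae.
- exact: m_integrable.
- exact: cmeasurableM (cmeasurableM m_measurable (cmeasurableJ (omega_measurable f))) (theta_measurable g).
- apply: filterS2 (Tomega_iota f) (Ttheta_iota g) => x Ta Ttg.
  by rewrite Ta Ttg conjCK.
Qed.

(* The test vector [y] is the preimage under [T_theta] of [(m / |m|) T_omega f]. *)
Lemma multiplier_test_vector f h : is_mult_value ip iota mu m omega theta f h ->
  exists y, C * l2sqnorm mu (Tomega (iota f)) <= Re (ip h y) /\
    Num.sqrt At * hn y <= Num.sqrt (l2sqnorm mu (Tomega (iota f))).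
Proof.
move=> Mf_h; set a := Tomega (iota f).
have a_l2 := T_square_integrable Tomega_measurable Tomega_bounded (iota f).
have m_neq0 x : m x != 0 by rewrite -cabs_eq0 gt_eqF // (lt_le_trans C_gt0).
set b := fun x => (cabs (m x))^-1%:C * m x * a x.
have cabs_b x : cabs (b x) = cabs (a x).
  by rewrite !cabsM cabsR ger0_norm ?invr_ge0 ?cabs_ge0 // mulVf ?mul1r // cabs_eq0.
have b_meas : cmeasurable b.
  apply: cmeasurableM (cmeasurableM (cmeasurableR _) m_measurable) a_l2.1.
  exact: measurable_inv_bounded_below C_gt0 (measurable_cabs m_measurable) m_ge.
have [y [Ty_b y_le]] := Ttheta_onto (square_integrable_eq_cabs b_meas cabs_b a_l2).
have b_norm : l2sqnorm mu b = l2sqnorm mu a by apply: eq_Rintegral => x _; rewrite cabs_b.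
rewrite b_norm in y_le; exists y; split=> //.
have mab : {ae mu, forall x, m x * a x * (Ttheta y x)^* = (cabs (m x) * cabs (a x) ^+ 2)%:C}.
  by apply: filterS Ty_b => x ->; rewrite mul_conj_phase.
have mab_meas : cmeasurable (fun x => (cabs (m x) * cabs (a x) ^+ 2)%:C).
  exact/cmeasurableR/measurable_funM/measurable_cabs2/a_l2.1/measurable_cabs.
have mab_int : rintegrable mu (fun x => cabs (m x) * cabs (a x) ^+ 2).
  exact: (cintegrable_ae (m_integrable (iota f) y) mab_meas mab).1.
rewrite -(Tcoef_multiplier Mf_h) /Tcoef (cintegral_ae (m_integrable (iota f) y) mab_meas mab).
rewrite cintegral_real /= /l2sqnorm -RintegralZl; [|exact: measurableT|exact: square_integrable_sqr].
apply: le_Rintegral => //; [exact: rintegrableZ (square_integrable_sqr a_l2) | move=> x _].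
by rewrite ler_wpM2r ?sqr_ge0.
Qed.

Lemma multiplier_lower_bound f h : is_mult_value ip iota mu m omega theta f h ->
  C * Num.sqrt At * Num.sqrt Aw * hn (iota f) <= hn h.
Proof.
move=> Mf_h; have [y [ip_ge y_le]] := multiplier_test_vector Mf_h.
have ip_le : Re (ip h y) <= hn h * hn y.
  by apply: le_trans (ler_norm _) (le_trans (Re_le_cabs _) (cabs_ip_le ip_sip h y)).
set s := Num.sqrt (l2sqnorm mu (Tomega (iota f))) in y_le *.
have s_ge0 : 0 <= s by exact: sqrtr_ge0.
have sqr_s : s ^+ 2 = l2sqnorm mu (Tomega (iota f)) by rewrite sqr_sqrtr ?l2sqnorm_ge0.
have s_ge : Num.sqrt Aw * hn (iota f) <= s.
  apply: ler_of_sqr => //; rewrite exprMn sqr_sqrtr ?(ltW Aw_gt0) // sqr_s.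
  exact: l2sqnorm_T_iota omega_measurable omega_lower Tomega_iota Tomega_measurable Tomega_bounded f.
have Cs_le : C * Num.sqrt At * s <= hn h.
  have [->|s_neq0] := eqVneq s 0; first by rewrite mulr0 hnorm_ge0.
  have s_gt0 : 0 < s by rewrite lt_def s_neq0.
  rewrite -(ler_pM2r s_gt0).
  have -> : C * Num.sqrt At * s * s = C * s ^+ 2 * Num.sqrt At by ring.
  apply: le_trans (_ : hn h * hn y * Num.sqrt At <= _).
    by rewrite ler_pM2r ?sqrtr_gt0 // sqr_s (le_trans ip_ge ip_le).
  rewrite -mulrA; apply: ler_pM; rewrite ?mulr_ge0 ?hnorm_ge0 ?sqrtr_ge0 //.
  by rewrite mulrC.
apply: le_trans Cs_le; rewrite -mulrA ler_wpM2l ?mulr_ge0 ?sqrtr_ge0 ?(ltW C_gt0) //.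
Qed.
End MultiplierLowerBound.

Lemma is_mult_valueB {R : realType} {D H : lmodType R[i]} {d : measure_display}
    {X : measurableType d} (p : nat -> D -> R) (ip : H -> H -> R[i]) (iota : D -> H)
    (mu : {measure set X -> \bar R}) (m : X -> R[i]) (omega theta : X -> D -> R[i])
    (f1 f2 : D) (h1 h2 : H) :
  is_semi_inner_product ip -> (forall x, in_cdual p (omega x)) ->
  in_mult_domain ip iota mu m omega theta f1 -> in_mult_domain ip iota mu m omega theta f2 ->
  is_mult_value ip iota mu m omega theta f1 h1 -> is_mult_value ip iota mu m omega theta f2 h2 ->
  is_mult_value ip iota mu m omega theta (f1 - f2) (h1 - h2).
Proof.
move=> ip_sip omega_cdual [f1_int _] [f2_int _] Mf1 Mf2 g.
have omegaB x : omega x (f1 - f2) = omega x f1 - omega x f2.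
  by rewrite addrC -scaleN1r (omega_cdual x).1 conjCN1 mulN1r addrC.
rewrite (ipBl ip_sip) Mf1 Mf2 -cintegralB //; congr cintegral; apply: funext => x.
by rewrite /mult_integrand omegaB conjcB mulrBr mulrBl.
Qed.

Theorem proposition5p5 (R : realType) (D H : lmodType R[i])
  (p : nat -> D -> R) (ip : H -> H -> R[i]) (iota : D -> H)
  (d : measure_display) (X : measurableType d) (mu : {measure set X -> \bar R})
  (omega theta : X -> D -> R[i]) (Tomega Ttheta : H -> X -> R[i])
  (m : X -> R[i]) (C : R) :
  is_rigged p ip iota ->
  is_reflexive p ->
  sigma_finite setT mu ->
  is_riesz_distribution_basis p ip iota mu omega ->
  is_riesz_distribution_basis p ip iota mu theta ->
  is_analysis_extension ip iota mu omega Tomega ->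
  is_analysis_extension ip iota mu theta Ttheta ->
  cmeasurable m ->
  (forall f g : H, cintegrable mu (fun x => m x * Tomega f x * (Ttheta g x)^*)) ->
  0 < C ->
  (forall x, C <= cabs (m x)) ->
  (forall (f1 f2 : D) (h : H),
     in_mult_domain ip iota mu m omega theta f1 ->
     in_mult_domain ip iota mu m omega theta f2 ->
     is_mult_value ip iota mu m omega theta f1 h ->
     is_mult_value ip iota mu m omega theta f2 h -> f1 = f2) /\
  exists c : R, 0 < c /\
    forall (f : D) (h : H),
      in_mult_domain ip iota mu m omega theta f ->
      is_mult_value ip iota mu m omega theta f h ->
      c * hnorm ip (iota f) <= hnorm ip h.
Proof.
move=> [[ip_hilbert _] iota_linear iota_inj iota_dense _] _ _.
move=> [[omega_cdual omega_meas [Aw [Bw [Aw_gt0 _ omega_frame]]]] _].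
move=> [[_ theta_meas [At [Bt [At_gt0 _ theta_frame]]]] theta_indep].
move=> [Tw_iota Tw_meas [Kw Tw_bounded] _] [Tt_iota Tt_meas [Kt Tt_bounded] Tt_linear].
move=> m_meas m_int C_gt0 m_ge.
have theta_finite f : (sqint mu (fun x => theta x f) < +oo)%E.
  exact: le_lt_trans (theta_frame f).2 (ltry _).
have Mf_ge := multiplier_lower_bound ip_hilbert iota_dense Aw_gt0 At_gt0 omega_meas theta_meas
  (fun f => (omega_frame f).1) (fun f => (theta_frame f).1) theta_finite theta_indep
  Tw_iota Tw_meas Tw_bounded Tt_iota Tt_meas Tt_bounded Tt_linear m_meas m_int C_gt0 m_ge.
have c_gt0 : 0 < C * Num.sqrt At * Num.sqrt Aw by rewrite !mulr_gt0 ?sqrtr_gt0.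
split; last by exists (C * Num.sqrt At * Num.sqrt Aw); split=> // f h _; exact: Mf_ge.
move=> f1 f2 h f1_dom f2_dom Mf1 Mf2.
have ip_sip := inner_product_semi ip_hilbert.1.
have := Mf_ge _ _ (is_mult_valueB ip_sip omega_cdual f1_dom f2_dom Mf1 Mf2).
rewrite subrr (hnorm0 ip_sip) pmulr_rle0 // => iota_le0.
have /(hnorm_eq0 ip_hilbert.1) : hnorm ip (iota (f1 - f2)) = 0.
  by apply/eqP; rewrite eq_le iota_le0 hnorm_ge0.
rewrite -scaleN1r addrC iota_linear scaleN1r addrC => /eqP; rewrite subr_eq0 => /eqP.
exact: iota_inj.
Qed.
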